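(* Let $P$ be a rooted forest on $[n]$ with natural labeling, and for $1\le i\le n$ define $\hat\partial_i$ on $\mathcal{L}(P)$ by $\pi\hat\partial_i=\pi\partial_{\pi^{-1}_i}$. Then for $\pi\in\mathcal{L}(P)$, $\pi\hat\partial_i$ is the linear extension obtained from $\pi$ by moving the letter $i$ to position $n$ and reordering the letters $j\succeq i$ (which form a chain) among the positions they then occupy so that the result is a linear extension of $P$.
   Context: A rooted forest is a disjoint union of rooted trees, a rooted tree being a connected finite poset in which each element is covered by at most one element. $\mathcal{L}(P)=\{\pi\in S_n : i\prec j \Rightarrow \pi^{-1}_i<\pi^{-1}_j\}$ in one-line notation $\pi=\pi_1\cdots\pi_n$. $\pi\tau_i$ ($1\le i<n$) swaps $\pi_i,\pi_{i+1}$ if they are incomparable and is $\pi$ otherwise; operators act on the right; $\partial_j=\tau_j\tau_{j+1}\cdots\tau_{n-1}$. *)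

(* Permutations of [n] = {1,...,n} in one-line notation are
   sequences of nats (positions 1..n correspond to list indices 0..n-1). *)
From mathcomp Require Import all_boot.
Set Implicit Arguments. Unset Strict Implicit. Unset Printing Implicit Defensive.

Definition inN (n x : nat) : bool := (1 <= x <= n).

Definition is_poset (n : nat) (le : rel nat) : Prop :=
  [/\ forall x, inN n x -> le x x,
      forall x y, inN n x -> inN n y -> le x y -> le y x -> x = y &
      forall x y z, inN n x -> inN n y -> inN n z -> le x y -> le y z -> le x z].

Definition ltP (le : rel nat) (x y : nat) : bool := (x != y) && le x y.

Definition covers (n : nat) (le : rel nat) (x y : nat) : bool :=
  ltP le x y && ~~ has (fun z => ltP le x z && ltP le z y) (iota 1 n).

(* rooted forest: a finite poset in which every element is covered by at
   most one element (its connected components are then rooted trees) *)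
Definition rooted_forest (n : nat) (le : rel nat) : Prop :=
  is_poset n le /\
  forall x y1 y2, inN n x -> inN n y1 -> inN n y2 ->
    covers n le x y1 -> covers n le x y2 -> y1 = y2.

Definition natural_labeling (n : nat) (le : rel nat) : Prop :=
  forall i j, inN n i -> inN n j -> ltP le i j -> i < j.

Definition is_perm (n : nat) (pi : seq nat) : Prop := perm_eq pi (iota 1 n).

Definition linext (n : nat) (le : rel nat) (pi : seq nat) : Prop :=
  is_perm n pi /\
  forall i j, inN n i -> inN n j -> ltP le i j -> index i pi < index j pi.

Definition incomparable (le : rel nat) (a b : nat) : bool :=
  ~~ le a b && ~~ le b a.

(* swap the entries at (0-based) list indices k and k+1 *)
Definition swap_at (s : seq nat) (k : nat) : seq nat :=
  [seq nth 0 s (if j == k then k.+1 else if j == k.+1 then k else j)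
  | j <- iota 0 (size s)].

(* pi tau_i (1 <= i < n): swap pi_i, pi_{i+1} if incomparable *)
Definition tau (le : rel nat) (pi : seq nat) (i : nat) : seq nat :=
  if incomparable le (nth 0 pi i.-1) (nth 0 pi i) then swap_at pi i.-1 else pi.

(* pi partial_j = pi tau_j tau_{j+1} ... tau_{n-1} (operators act on the right) *)
Definition partial (n : nat) (le : rel nat) (pi : seq nat) (j : nat) : seq nat :=
  foldl (tau le) pi (iota j (n - j)).

(* pi hatpartial_i = pi partial_{pi^{-1}_i}, with pi^{-1}_i the 1-based position of i *)
Definition hat_partial (n : nat) (le : rel nat) (pi : seq nat) (i : nat) : seq nat :=
  partial n le pi (index i pi).+1.

(* The up-set of x is a chain: for x < j1, j2, the minimal elements above x below j1 and below j2
   both cover x, so they coincide in a forest; recursing on this common cover, which has a larger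
   label, ends with j1 and j2 comparable.
   With p the position of i, pi partial_p walks i to the right: the walking letter a >= i meets
   the next letter b; if they are incomparable tau swaps them, otherwise b is not below a (pi is a
   linear extension), so a < b and b >= i carries on the walk.  The letters passed over are thus
   those of pi with i removed, except that letters >= i get exchanged, and the walk ends with a
   letter >= i in position n. *)
From Pilot Require Import Defs.
From mathcomp Require Import all_boot zify.
Set Implicit Arguments. Unset Strict Implicit. Unset Printing Implicit Defensive.

Lemma nth_rem (x : nat) (s : seq nat) k :
  nth 0 (rem x s) k = if k < index x s then nth 0 s k else nth 0 s k.+1.
Proof.
elim: s k => [|y s IHs] k /=; first by case: k.
by case: eqP => [-> //|_]; case: k.
Qed.

Section MoveToEnd.
Variables (x : nat) (s : seq nat).
Hypothesis x_in : x \in s.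

Lemma nth_move_to_end_before k :
  k < index x s -> nth 0 (rcons (rem x s) x) k = nth 0 s k.
Proof.
move=> lt_k; have lt_idx : index x s < size s by rewrite index_mem.
by rewrite nth_rcons (size_rem x_in) nth_rem lt_k ltn_predRL (leq_ltn_trans lt_k).
Qed.

Lemma nth_move_to_end_after k : index x s <= k -> k.+1 < size s ->
  nth 0 (rcons (rem x s) x) k = nth 0 s k.+1.
Proof.
by move=> le_idx lt_k; rewrite nth_rcons (size_rem x_in) nth_rem ltn_predRL lt_k ltnNge le_idx.
Qed.

Lemma nth_move_to_end_last : nth 0 (rcons (rem x s) x) (size s).-1 = x.
Proof. by rewrite nth_rcons (size_rem x_in) ltnn eqxx. Qed.

End MoveToEnd.

Definition swap_idx (k j : nat) : nat :=
  if j == k then k.+1 else if j == k.+1 then k else j.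

Lemma swap_idxl k : swap_idx k k = k.+1.
Proof. by rewrite /swap_idx eqxx. Qed.

Lemma swap_idxr k : swap_idx k k.+1 = k.
Proof. by rewrite /swap_idx eqxx ifN_eq // neq_ltn ltnSn orbT. Qed.

Lemma swap_idx_out k j : j != k -> j != k.+1 -> swap_idx k j = j.
Proof. by move=> ne_jk ne_jk1; rewrite /swap_idx !ifN_eq. Qed.

Lemma swap_idxK k : involutive (swap_idx k).
Proof.
move=> j; rewrite /swap_idx.
have [-> | ne_jk] := eqVneq j k; first by rewrite eqxx; case: eqP => //; lia.
have [-> | ne_jk1] := eqVneq j k.+1; first by case: eqP => //; lia.
by rewrite !ifN_eq.
Qed.

Lemma swap_idx_lt k m j : k.+1 < m -> j < m -> swap_idx k j < m.
Proof. by rewrite /swap_idx; repeat case: eqP => ?; lia. Qed.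

Lemma swap_idx_mono k u v :
  swap_idx k u < swap_idx k v -> u < v \/ (u = k.+1 /\ v = k).
Proof. by rewrite /swap_idx; repeat case: ifP => [/eqP|/negbT/eqP] ?; lia. Qed.

Lemma swap_atE s k : swap_at s k = map (nth 0 s \o swap_idx k) (iota 0 (size s)).
Proof. by []. Qed.

Lemma nth_swap_at s k j : j < size s -> nth 0 (swap_at s k) j = nth 0 s (swap_idx k j).
Proof. by move=> lt_js; rewrite swap_atE (nth_map 0) ?size_iota // nth_iota. Qed.

Lemma perm_swap_at s k : k.+1 < size s -> perm_eq (swap_at s k) s.
Proof.
move=> lt_ks; rewrite swap_atE map_comp -[X in perm_eq _ X](mkseq_nth 0) /mkseq.
apply: perm_map; apply: uniq_perm.
- by rewrite (map_inj_uniq (inv_inj (swap_idxK k))) iota_uniq.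
- exact: iota_uniq.
move=> j; rewrite mem_iota add0n; apply/mapP/idP => [[j'] | lt_js].
  by rewrite mem_iota add0n => lt_j's ->; apply: swap_idx_lt.
by exists (swap_idx k j); rewrite ?swap_idxK // mem_iota add0n swap_idx_lt.
Qed.

Section PositionalLinearExtension.
Variables (n : nat) (le : rel nat).

Lemma is_perm_size s : is_perm n s -> size s = n.
Proof. by move=> perm_s; rewrite (perm_size perm_s) size_iota. Qed.

Lemma is_perm_mem s x : is_perm n s -> (x \in s) = inN n x.
Proof. by move=> perm_s; rewrite (perm_mem perm_s) mem_iota /inN; lia. Qed.

Lemma is_perm_uniq s : is_perm n s -> uniq s.
Proof. by move=> perm_s; rewrite (perm_uniq perm_s) iota_uniq. Qed.

Lemma is_perm_nth s k : is_perm n s -> k < n -> inN n (nth 0 s k).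
Proof. by move=> perm_s lt_kn; rewrite -(is_perm_mem _ perm_s) mem_nth ?is_perm_size. Qed.

Lemma linextP s : linext n le s <->
  is_perm n s /\
  forall u v, u < n -> v < n -> Defs.ltP le (nth 0 s u) (nth 0 s v) -> u < v.
Proof.
split=> -[perm_s ext_s]; split=> //.
  move=> u v lt_un lt_vn lt_uv; have size_s := is_perm_size perm_s.
  have := ext_s _ _ (is_perm_nth perm_s lt_un) (is_perm_nth perm_s lt_vn) lt_uv.
  by rewrite !index_uniq ?size_s ?is_perm_uniq.
move=> x y x_in y_in lt_xy.
have [xs ys] : x \in s /\ y \in s by rewrite !(is_perm_mem _ perm_s).
by apply: ext_s; rewrite ?nth_index // -(is_perm_size perm_s) index_mem.
Qed.

Lemma linext_swap_at s k : linext n le s -> k.+1 < n ->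
  incomparable le (nth 0 s k) (nth 0 s k.+1) -> linext n le (swap_at s k).
Proof.
move=> /linextP[perm_s ext_s] lt_kn /andP[not_le_kk1 _].
have size_s := is_perm_size perm_s.
apply/linextP; split; first by apply: perm_trans perm_s; apply: perm_swap_at; rewrite size_s.
move=> u v lt_un lt_vn; rewrite !nth_swap_at ?size_s // => lt_uv.
have := ext_s _ _ (swap_idx_lt lt_kn lt_un) (swap_idx_lt lt_kn lt_vn) lt_uv.
case/swap_idx_mono => [// | [eq_u eq_v]]; subst u v; move: lt_uv.
by rewrite swap_idxl swap_idxr /Defs.ltP (negbTE not_le_kk1) andbF.
Qed.

Lemma linext_comparable_next s k : is_poset n le -> linext n le s -> k.+1 < n ->
  ~~ incomparable le (nth 0 s k) (nth 0 s k.+1) -> le (nth 0 s k) (nth 0 s k.+1).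
Proof.
move=> [le_refl _ _] /linextP[perm_s ext_s] lt_kn.
rewrite /incomparable negb_and !negbK => /orP[// | le_next].
apply: contraLR isT => not_le; have lt_k_n := ltnW lt_kn.
have ne : nth 0 s k.+1 != nth 0 s k.
  by apply: contraNneq not_le => ->; rewrite le_refl ?is_perm_nth.
by have := ext_s _ _ lt_kn lt_k_n; rewrite /Defs.ltP ne le_next => /(_ isT); lia.
Qed.

End PositionalLinearExtension.

Section UpperSetsAreChains.
Variables (n : nat) (le : rel nat).
Hypothesis natural_le : natural_labeling n le.

Lemma exists_cover x y : is_poset n le -> inN n x -> inN n y -> Defs.ltP le x y ->
  exists c, [/\ inN n c, covers n le x c & le c y].
Proof.
move=> [le_refl _ le_trans] x_in y_in lt_xy.
have ex_between : exists z, [&& inN n z, Defs.ltP le x z & le z y].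
  by exists y; rewrite y_in lt_xy le_refl.
have [c /and3P[c_in lt_xc le_cy] c_min] := ex_minnP ex_between.
exists c; split=> //; rewrite /covers lt_xc; apply/hasPn => z.
rewrite mem_iota => z_range; apply/negP => /andP[lt_xz lt_zc].
have z_in : inN n z by rewrite /inN; lia.
have := natural_le z_in c_in lt_zc; rewrite ltnNge c_min //.
by rewrite z_in lt_xz (le_trans _ _ _ z_in c_in y_in) //; case/andP: lt_zc.
Qed.

Lemma upper_set_chain x j1 j2 : rooted_forest n le -> inN n x -> inN n j1 -> inN n j2 ->
  le x j1 -> le x j2 -> le j1 j2 || le j2 j1.
Proof.
move=> [poset_le unique_cover]; have [m] := ubnP (n - x); elim: m x => // m IHm x lt_xm x_in j1_in j2_in le_xj1 le_xj2.
have [<- | ne_xj1] := eqVneq x j1; first by rewrite le_xj2.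
have [<- | ne_xj2] := eqVneq x j2; first by rewrite le_xj1 orbT.
have lt_xj1 : Defs.ltP le x j1 by apply/andP.
have lt_xj2 : Defs.ltP le x j2 by apply/andP.
have [c1 [c1_in cov1 le_c1j1]] := exists_cover poset_le x_in j1_in lt_xj1.
have [c2 [c2_in cov2 le_c2j2]] := exists_cover poset_le x_in j2_in lt_xj2.
have eq_c := unique_cover _ _ _ x_in c1_in c2_in cov1 cov2; subst c2.
have lt_xc1 : x < c1 by apply: natural_le => //; case/andP: cov1.
by apply: (IHm c1) => //; move: c1_in; rewrite /inN; lia.
Qed.

End UpperSetsAreChains.

Definition agree_outside_upset (le : rel nat) (i : nat) (s r : seq nat) (k : nat) : bool :=
  if le i (nth 0 s k) then le i (nth 0 r k) else nth 0 r k == nth 0 s k.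

Section Walk.
Variables (n : nat) (le : rel nat) (i : nat) (t : seq nat).
Hypotheses (poset_le : is_poset n le) (i_in : inN n i).

(* The letter at position [q] is the walking one; the letters after it are those of [t] shifted by
   one position. *)
Definition walk_inv (q : nat) (sg : seq nat) : Prop :=
  [/\ linext n le sg, q < n, le i (nth 0 sg q),
      forall k, k < q -> agree_outside_upset le i t sg k &
      forall k, q < k < n -> nth 0 sg k = nth 0 t k.-1].

Lemma walk_inv_tau q sg : walk_inv q sg -> q.+1 < n -> walk_inv q.+1 (tau le sg q.+1).
Proof.
case=> ext_sg lt_qn le_i_walker agree_sg tail_sg lt_q1n.
have [perm_sg _] := ext_sg; have size_sg := is_perm_size perm_sg.
have [le_refl _ le_trans] := poset_le.
have next_eq : nth 0 sg q.+1 = nth 0 t q by rewrite tail_sg ?ltnSn.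
rewrite /tau /=; case: ifP => [incomp | comp].
  split=> //; first exact: linext_swap_at.
  - by rewrite nth_swap_at ?size_sg // swap_idxr.
  - move=> k lt_kq1; rewrite /agree_outside_upset nth_swap_at ?size_sg; last by lia.
    have [lt_kq | ->] : k < q \/ k = q by lia.
      by rewrite swap_idx_out; [exact: agree_sg | lia | lia].
    by rewrite swap_idxl -next_eq; case: ifP.
  move=> k /andP[lt_q1k lt_kn]; rewrite nth_swap_at ?size_sg //.
  by rewrite swap_idx_out; [apply: tail_sg; lia | lia | lia].
have le_i_next : le i (nth 0 sg q.+1).
  apply: (le_trans _ _ _ i_in (is_perm_nth perm_sg lt_qn) (is_perm_nth perm_sg lt_q1n)) => //.
  by apply: (linext_comparable_next poset_le ext_sg lt_q1n); rewrite comp.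
split=> // [k lt_kq1 | k /andP[lt_q1k lt_kn]]; last by apply: tail_sg; lia.
have [lt_kq | ->] : k < q \/ k = q by lia.
  exact: agree_sg.
by rewrite /agree_outside_upset -next_eq le_i_next.
Qed.

Lemma walk_inv_partial q sg : walk_inv q sg -> walk_inv n.-1 (partial n le sg q.+1).
Proof.
rewrite /partial; have [m] := ubnP (n - q.+1).
elim: m q sg => // m IHm q sg lt_m inv_q; have [_ lt_qn _ _ _] := inv_q.
have [eq_q | lt_q1n] : q = n.-1 \/ q.+1 < n by lia.
  by rewrite (_ : n - q.+1 = 0) -?eq_q //; lia.
rewrite (_ : n - q.+1 = (n - q.+2).+1) /=; last by lia.
by apply: IHm; [lia | apply: walk_inv_tau].
Qed.

End Walk.

Theorem lemma6p5 (n : nat) (le : rel nat) :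
  rooted_forest n le -> natural_labeling n le ->
  forall (pi : seq nat) (i : nat), linext n le pi -> inN n i ->
  let rho := hat_partial n le pi i in
  let s := rcons (rem i pi) i in
  (forall j1 j2, inN n j1 -> inN n j2 -> le i j1 -> le i j2 ->
      le j1 j2 || le j2 j1) /\
  linext n le rho /\
  (forall k, k < n ->
     if le i (nth 0 s k) then le i (nth 0 rho k) else nth 0 rho k == nth 0 s k).
Proof.
move=> forest_le natural_le pi i ext_pi i_in rho s.
have poset_le := forest_le.1; have [le_refl _ _] := poset_le.
split; first by move=> j1 j2; apply: upper_set_chain.
have [perm_pi _] := ext_pi; have size_pi := is_perm_size perm_pi.
have i_pi : i \in pi by rewrite (is_perm_mem _ perm_pi).
have lt_ip : index i pi < n by rewrite -size_pi index_mem.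
have inv0 : walk_inv n le i s (index i pi) pi.
  split=> // [|k lt_k|k /andP[lt_ik lt_kn]]; first by rewrite nth_index // le_refl.
    by rewrite /agree_outside_upset nth_move_to_end_before //; case: ifP.
  by rewrite nth_move_to_end_after ?size_pi ?prednK //; lia.
have [ext_rho _ le_i_last agree_rho _] := walk_inv_partial poset_le i_in inv0.
split=> // k lt_kn; have [lt_k | ->] : k < n.-1 \/ k = n.-1 by lia.
  exact: agree_rho.
by rewrite (_ : nth 0 s n.-1 = i) ?le_refl // -size_pi nth_move_to_end_last.
Qed.
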